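(* Let $k\in\{1,2,3\}$. A rule of a $3$-state $3$-neighbor vector-valued fuzzy cellular automaton ($3$-VFCA) is $k$-number-conserving if and only if the corresponding $3$-state $3$-neighbor vector-valued cellular automaton ($3$-VCA) is $k$-number-conserving.
   Context: Let $\bm{e}_1,\bm{e}_2,\bm{e}_3$ be the standard basis of $\mathbb{R}^3$ and $\Delta=\{(x_1,x_2,x_3)^{\top}\mid x_1+x_2+x_3=1,\ x_i\ge 0\}$. A $3$-VCA is given by a local rule $h:\{\bm{e}_1,\bm{e}_2,\bm{e}_3\}^3\to\{\bm{e}_1,\bm{e}_2,\bm{e}_3\}$; its cells $i\in\mathbb{Z}$ have states $\bm{x}_i^t\in\{\bm{e}_1,\bm{e}_2,\bm{e}_3\}$ evolving by $\bm{x}_i^{t+1}=h(\bm{x}_{i-1}^t,\bm{x}_i^t,\bm{x}_{i+1}^t)$. The corresponding $3$-VFCA has state set $\Delta$ and local rule $f:\Delta^3\to\Delta$, $f(\bm{x},\bm{y},\bm{z})=\sum_{j,k,\ell=1}^3 x_jy_kz_\ell\,h(\bm{e}_j,\bm{e}_k,\bm{e}_\ell)$, with the same update $\bm{x}_i^{t+1}=f(\bm{x}_{i-1}^t,\bm{x}_i^t,\bm{x}_{i+1}^t)$. Consider periodic configurations with positive integer period $L$, i.e. $\bm{x}_i^t=\bm{x}_{i+L}^t$. Writing $[\bm{x}]_k$ for the $k$th entry, set $\nu^t(k)=\sum_{i=1}^L[\bm{x}_i^t]_k$. The rule is $k$-number-conserving if $\nu^{t+1}(k)=\nu^t(k)$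 for all $t\in\mathbb{Z}_{\ge0}$ and every periodic initial configuration (of every period $L$), with states in $\{\bm{e}_1,\bm{e}_2,\bm{e}_3\}$ for the $3$-VCA and in $\Delta$ for the $3$-VFCA. *)

From HB Require Import structures.
From mathcomp Require Import all_boot all_order all_algebra.
From mathcomp Require Import reals.
Set Implicit Arguments. Unset Strict Implicit. Unset Printing Implicit Defensive.
Import Order.TTheory GRing.Theory Num.Theory.
Local Open Scope ring_scope.

(* The standard basis e_1,e_2,e_3 is indexed by 'I_3 (e_(j+1) <-> j : 'I_3).
   A local rule h : {e1,e2,e3}^3 -> {e1,e2,e3} is thus a function on indices. *)
Definition local_rule := 'I_3 -> 'I_3 -> 'I_3 -> 'I_3.

Definition ebasis (R : realType) (j : 'I_3) : 'cV[R]_3 := delta_mx j 0.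

Definition in_simplex (R : realType) (x : 'cV[R]_3) : Prop :=
  (\sum_(j < 3) x j 0 = 1) /\ (forall j : 'I_3, 0 <= x j 0).

Definition vfca_rule (R : realType) (h : local_rule) (x y z : 'cV[R]_3) : 'cV[R]_3 :=
  \sum_(j < 3) \sum_(k < 3) \sum_(l < 3)
     (x j 0 * y k 0 * z l 0) *: ebasis R (h j k l).

Definition step (S : Type) (g : S -> S -> S -> S) (c : int -> S) : int -> S :=
  fun i => g (c (i - 1)) (c i) (c (i + 1)).

Definition evol (S : Type) (g : S -> S -> S -> S) (c : int -> S) (t : nat) : int -> S :=
  iter t (step g) c.

Definition periodic (S : Type) (L : nat) (c : int -> S) : Prop :=
  forall i : int, c (i + L%:Z) = c i.

(* nu^t(k) for the 3-VCA: sum_{i=1}^L [x_i]_k, where [e_j]_k = (j == k). *)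
Definition nu_vca (L : nat) (c : int -> 'I_3) (k : 'I_3) : nat :=
  \sum_(1 <= i < L.+1) (c (i%:Z) == k : nat).

Definition nu_vfca (R : realType) (L : nat) (c : int -> 'cV[R]_3) (k : 'I_3) : R :=
  \sum_(1 <= i < L.+1) c (i%:Z) k 0.

Definition vca_number_conserving (h : local_rule) (k : 'I_3) : Prop :=
  forall (L : nat) (c : int -> 'I_3), (0 < L)%N -> periodic L c ->
    forall t : nat, nu_vca L (evol h c t.+1) k = nu_vca L (evol h c t) k.

Definition vfca_number_conserving (R : realType) (h : local_rule) (k : 'I_3) : Prop :=
  forall (L : nat) (c : int -> 'cV[R]_3), (0 < L)%N -> periodic L c ->
    (forall i, in_simplex (c i)) ->
    forall t : nat,
      nu_vfca L (evol (vfca_rule h) c t.+1) k = nu_vfca L (evol (vfca_rule h) c t) k.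

From HB Require Import structures.
From mathcomp Require Import all_boot all_order all_algebra.
From mathcomp Require Import reals.
From mathcomp Require Import ring lra.
Set Implicit Arguments.
Unset Strict Implicit.
Unset Printing Implicit Defensive.
Import Order.TTheory GRing.Theory Num.Theory.
Local Open Scope ring_scope.

(* The 3-VCA embeds in the 3-VFCA through the basis vectors, so conservation
   for the VFCA implies it for the VCA.  Conversely, a k-number-conserving VCA
   rule has a flux: [h(a,b,c) = k] = [b = k] + K(b,c) - K(a,b) for some K.
   The VFCA rule is the trilinear extension of h, so on vectors with
   coordinate sum 1 it satisfies the same identity with K replaced by its
   bilinear extension, and the flux terms telescope over a period. *)

Lemma periodic_step (S : Type) (g : S -> S -> S -> S) L c :
  periodic L c -> periodic L (step g c).
Proof.
move=> c_per i; rewrite /step -(c_per (i - 1)) -(c_per (i + 1)) c_per.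
by rewrite (addrAC i L (-1)) (addrAC i L 1).
Qed.

Lemma periodic_evol (S : Type) (g : S -> S -> S -> S) L c t :
  periodic L c -> periodic L (evol g c t).
Proof. by move=> c_per; elim: t => [|t IHt] //=; apply: periodic_step. Qed.

Lemma evol_inv (S : Type) (g : S -> S -> S -> S) (P : S -> Prop) c :
  (forall x y z, P x -> P y -> P z -> P (g x y z)) ->
  (forall i, P (c i)) -> forall t i, P (evol g c t i).
Proof. by move=> gP cP; elim=> [|t IHt] i //=; apply: gP. Qed.

Section Flux.
Variables (S : Type) (V : zmodType) (g : S -> S -> S -> S).
Variables (w : S -> V) (J : S -> S -> V) (P : S -> Prop).
Hypothesis g_flux :
  forall x y z, P x -> P z -> w (g x y z) = w y + J y z - J x y.

Lemma sum_step_flux L (c : int -> S) :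
  periodic L c -> (forall i, P (c i)) ->
  \sum_(1 <= i < L.+1) w (step g c i) = \sum_(1 <= i < L.+1) w (c i).
Proof.
move=> c_per cP.
have flux_cancels :
    \sum_(1 <= i < L.+1) (J (c i) (c (i%:Z + 1)) - J (c (i%:Z - 1)) (c i)) = 0.
  rewrite (telescope_sumr_eq (fun n : nat => J (c (n%:Z - 1)) (c n))) //.
    rewrite -addn1 PoszD addrK [L%:Z + _]addrC c_per.
    by rewrite -[L%:Z]add0r c_per subrr.
  by move=> n _; rewrite -addn1 PoszD addrK.
rewrite -[RHS]addr0 -[X in _ = _ + X]flux_cancels -big_split.
apply: eq_bigr => i _.
by rewrite /step g_flux ?cP //= addrA.
Qed.

End Flux.

Definition cyclic_conf (w : seq 'I_3) (i : int) : 'I_3 :=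
  nth ord0 w `|(i %% size w)%Z|.

Lemma periodic_cyclic_conf w : periodic (size w) (cyclic_conf w).
Proof. by move=> i; rewrite /cyclic_conf modzDr. Qed.

Lemma vca_flux (R : realFieldType) h k :
  vca_number_conserving h k -> exists K : 'I_3 -> 'I_3 -> R,
    forall a b c, (h a b c == k)%:R = (b == k)%:R + K b c - K a b.
Proof.
move=> h_cons.
have balance w : (0 < size w)%N ->
    (nu_vca (size w) (step h (cyclic_conf w)) k)%:R =
    (nu_vca (size w) (cyclic_conf w) k)%:R :> R.
  by move=> w_gt0; rewrite (h_cons _ _ w_gt0 (periodic_cyclic_conf w) 0).
pose D a b c : R := (h a b c == k)%:R - (b == k)%:R.
(* Balance on the cyclic words 0, 00abc00 and 00bc000 gives D 0 0 0 = 0 and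
   D a b c = K b c - K a b. *)
exists (fun a b => D ord0 ord0 a + D ord0 a b) => a b c.
have := balance [:: ord0] isT.
have := balance [:: ord0; ord0; a; b; c; ord0; ord0] isT.
have := balance [:: ord0; ord0; b; c; ord0; ord0; ord0] isT.
rewrite /nu_vca /step /cyclic_conf unlock /= !natrD /D.
lra.
Qed.

Section VFCA.
Variables (R : realType) (h : local_rule).

Definition mass (x : 'cV[R]_3) : R := \sum_(j < 3) x j 0.

Definition bilin (K : 'I_3 -> 'I_3 -> R) (u v : 'cV[R]_3) : R :=
  \sum_(m < 3) \sum_(l < 3) u m 0 * v l 0 * K m l.

Lemma ebasisE a j : ebasis R a j 0 = (j == a)%:R.
Proof. by rewrite mxE eqxx andbT. Qed.

Lemma in_simplex_ebasis a : in_simplex (ebasis R a).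
Proof.
split=> [|j]; last by rewrite ebasisE ler0n.
rewrite (bigD1 a) //= big1 => [|j /negbTE aj].
  by rewrite ebasisE eqxx addr0.
by rewrite ebasisE aj.
Qed.

Lemma vfca_ruleE (x y z : 'cV[R]_3) n :
  vfca_rule h x y z n 0 = \sum_(j < 3) \sum_(m < 3) \sum_(l < 3)
     x j 0 * y m 0 * z l 0 * (h j m l == n)%:R.
Proof.
rewrite summxE; apply: eq_bigr => j _; rewrite summxE; apply: eq_bigr => m _.
by rewrite summxE; apply: eq_bigr => l _; rewrite !mxE eqxx andbT eq_sym.
Qed.

Lemma vfca_rule_ebasis a b c :
  vfca_rule h (ebasis R a) (ebasis R b) (ebasis R c) = ebasis R (h a b c).
Proof.
apply/matrixP => n i; rewrite ord1 vfca_ruleE ebasisE.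
have sum_ebasis_mul d (F : 'I_3 -> R) : \sum_(j < 3) ebasis R d j 0 * F j = F d.
  rewrite (bigD1 d) //= big1 => [|j /negbTE dj].
    by rewrite ebasisE eqxx mul1r addr0.
  by rewrite ebasisE dj mul0r.
under eq_bigr do under eq_bigr do under eq_bigr do rewrite -!mulrA.
under eq_bigr do under eq_bigr do rewrite -!mulr_sumr sum_ebasis_mul.
under eq_bigr do rewrite -mulr_sumr sum_ebasis_mul.
by rewrite sum_ebasis_mul eq_sym.
Qed.

Lemma evol_vfca_ebasis (c : int -> 'I_3) t i :
  evol (vfca_rule h) (fun i => ebasis R (c i)) t i = ebasis R (evol h c t i).
Proof. by elim: t i => [|t IHt] i //=; rewrite /step !IHt vfca_rule_ebasis. Qed.

Lemma nu_vfca_evol_ebasis L (c : int -> 'I_3) t k :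
  nu_vfca L (evol (vfca_rule h) (fun i => ebasis R (c i)) t) k =
  (nu_vca L (evol h c t) k)%:R.
Proof.
rewrite natr_sum; apply: eq_bigr => i _.
by rewrite evol_vfca_ebasis ebasisE eq_sym.
Qed.

Lemma mass_vfca_rule (x y z : 'cV[R]_3) :
  mass (vfca_rule h x y z) = mass x * mass y * mass z.
Proof.
have sum_indicator j m l : \sum_(n < 3) ((h j m l == n)%:R : R) = 1.
  rewrite (bigD1 (h j m l)) //= eqxx big1 ?addr0 // => n.
  by rewrite eq_sym => /negbTE ->.
rewrite /mass; under eq_bigr do rewrite vfca_ruleE.
rewrite exchange_big; under eq_bigr do rewrite exchange_big.
under eq_bigr do under eq_bigr do rewrite exchange_big.
under eq_bigr do under eq_bigr do under eq_bigr do
  rewrite -mulr_sumr sum_indicator mulr1.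
rewrite !big_ord_recr !big_ord0 /=; ring.
Qed.

Lemma vfca_rule_flux k (K : 'I_3 -> 'I_3 -> R) :
  (forall a b c, (h a b c == k)%:R = (b == k)%:R + K b c - K a b) ->
  forall x y z, mass x = 1 -> mass z = 1 ->
  vfca_rule h x y z k 0 = y k 0 + bilin K y z - bilin K x y.
Proof.
move=> h_flux x y z mass_x mass_z.
have -> : y k 0 = \sum_(m < 3) y m 0 * (m == k)%:R.
  rewrite (bigD1 k) //= eqxx mulr1 big1 ?addr0 // => m /negbTE ->.
  by rewrite mulr0.
set Q := \sum_(m < 3) _.
transitivity
  (mass x * mass z * Q + mass x * bilin K y z - mass z * bilin K x y).
  rewrite vfca_ruleE /mass /bilin /Q !big_ord_recr !big_ord0 /= !h_flux; ring.
by rewrite mass_x mass_z !mul1r.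
Qed.

End VFCA.

Theorem mainTheorem2 (R : realType) (h : local_rule) (k : 'I_3) :
  vfca_number_conserving R h k <-> vca_number_conserving h k.
Proof.
split=> [vfca_cons L c L_gt0 c_per t | vca_cons].
- have ec_per : periodic L (fun i => ebasis R (c i)) by move=> i; rewrite c_per.
  have := vfca_cons L _ L_gt0 ec_per (fun i => in_simplex_ebasis R (c i)) t.
  by rewrite !nu_vfca_evol_ebasis => /eqP; rewrite eqr_nat => /eqP.
- have [K h_flux] := vca_flux R vca_cons.
  move=> L c _ c_per c_simplex t.
  have mass_t : forall i, mass (evol (vfca_rule h) c t i) = 1.
    apply: (evol_inv (P := fun x => mass x = 1)) => [x y z mx my mz|i].
      by rewrite mass_vfca_rule mx my mz !mul1r.
    by case: (c_simplex i).
  exact: (sum_step_flux (vfca_rule_flux h_flux)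
           (periodic_evol _ t c_per) mass_t).
Qed.
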